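(* Let $p$ be a prime, $d \ge 0$ an integer, $G=(\mathbb{Z}/p\mathbb{Z})^d$, and let $t, r$ be integers with $0 \leq t \leq d$, $p^t < r \leq p^{t+1}$ (and $r \le p^d$, so that $\rho_G^-(r)$ is defined). Then \[\rho_G^-(r) \leq p^t \min\left\{ 2\left\lceil\frac{r}{p^t}\right\rceil - 1,\ p\right\}.\]
   Context: For a finite abelian group $(G,+)$ of order $N$ and subsets $A, B \subseteq G$, write $A - B = \{a - b \mid a \in A, b \in B\}$. For $1 \le r \le N$ define $\rho^-_G(r) = \min \{|A - A| \mid A \subseteq G, |A| = r\}$. *)

From HB Require Import structures.
From mathcomp Require Import all_boot all_order all_algebra.
Set Implicit Arguments. Unset Strict Implicit. Unset Printing Implicit Defensive.
Import GRing.Theory.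

Definition diffset (G : finZmodType) (A : {set G}) : {set G} :=
  [set (a - b)%R | a in A, b in A].

(* rho^-_G(r) = min { |A - A| : A subset of G, |A| = r }.
   (For r with no subset of size r, i.e. r > |G|, the value defaults to #|G|;
    the theorem only uses 1 <= r <= |G|.) *)
Definition rho_minus (G : finZmodType) (r : nat) : nat :=
  \big[minn/#|G|]_(A : {set G} | #|A| == r) #|diffset A|.

Definition ceil_div (m n : nat) : nat := (m + n.-1) %/ n.

From mathcomp Require Import all_boot all_order all_algebra.
From mathcomp Require Import zify.

Set Implicit Arguments.
Unset Strict Implicit.
Unset Printing Implicit Defensive.

(* Let q = p^t and k = ceil(r/q) <= p.  The box B = F_p^t x {0, ..., k-1} x {0}^(d-t-1)
   has q k >= r points, and its difference set is contained in the box
   F_p^t x {-(k-1), ..., k-1} x {0}^(d-t-1), of size q * min(2k-1, p).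
   Any r-subset of B therefore witnesses the bound. *)

Import Order.TTheory GRing.Theory.

Lemma leq_ceil_div_mul m q : 0 < q -> m <= ceil_div m q * q.
Proof.
move=> q_gt0; rewrite /ceil_div.
have := divn_eq (m + q.-1) q; have := ltn_pmod (m + q.-1) q_gt0; lia.
Qed.

Lemma ceil_div_leq m n q : 0 < q -> m <= n * q -> ceil_div m q <= n.
Proof. by move=> q_gt0 le_m_nq; rewrite /ceil_div -ltnS ltn_divLR //; lia. Qed.

Lemma prod_ord_profile d t a b : t < d ->
  \prod_(i < d) (if i < t then a else if i == t :> nat then b else 1) = a ^ t * b.
Proof.
move=> lt_td.
rewrite -(big_mkord xpredT (fun i => if i < t then a else if i == t then b else 1)).
rewrite (big_cat_nat (leq0n t) (ltnW lt_td)) /= [X in _ * X]big_ltn //= ltnn eqxx.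
rewrite big_nat_cond (eq_bigr (fun=> a)); last by move=> i /andP[/andP[_ ->]].
rewrite -big_nat_cond prod_nat_const_nat subn0 big1_seq ?muln1 //.
by move=> i /andP[_]; rewrite mem_iota => /andP[lt_ti _]; rewrite ltnNge ltnW ?gtn_eqF.
Qed.

Lemma exists_subset_of_card (T : finType) (B : {set T}) r :
  r <= #|B| -> exists2 A : {set T}, A \subset B & #|A| = r.
Proof.
move=> le_rB; exists [set x in take r (enum B)].
  by apply/subsetP => x; rewrite inE => /mem_take; rewrite mem_enum.
rewrite cardsE; have /card_uniqP -> : uniq (take r (enum B)).
  by rewrite take_uniq ?enum_uniq.
by rewrite size_takel // -cardE.
Qed.

Section DifferenceSets.

Variable G : finZmodType.

Lemma rho_minus_le (A : {set G}) r : #|A| = r -> rho_minus G r <= #|diffset A|.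
Proof.
by move=> cardA; rewrite /rho_minus -minEnat -leEnat; apply: bigmin_le_cond; apply/eqP.
Qed.

Lemma diffsetS (A B : {set G}) : A \subset B -> diffset A \subset diffset B.
Proof. by move=> sAB; apply: imset2S. Qed.

Lemma diffset1 (a : G) : diffset [set a] = [set 0%R].
Proof.
apply/setP => x; rewrite !inE; apply/imset2P/eqP => [[_ _ /set1P-> /set1P-> ->]|->].
  by rewrite subrr.
by exists a a; rewrite ?set11 ?subrr.
Qed.

Definition progression (g : G) (k : nat) : {set G} := [set (g *+ i)%R | i : 'I_k].

Lemma card_diffset_progression (g : G) k : #|diffset (progression g k)| <= (2 * k).-1.
Proof.
rewrite -[(2 * k).-1]card_ord -cardsT.
apply: leq_trans (leq_imset_card (fun i : 'I__ => g *+ i - g *+ k.-1)%R _).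
apply/subset_leq_card/subsetP => _ /imset2P[_ _ /imsetP[i _ ->] /imsetP[j _ ->] ->].
have lt_ij : i + k.-1 - j < (2 * k).-1 by have := ltn_ord i; have := ltn_ord j; lia.
apply/imsetP; exists (Ordinal lt_ij); rewrite ?inE //=.
rewrite mulrnBr; last by have := ltn_ord j; lia.
by rewrite mulrnDr addrAC addrK.
Qed.

End DifferenceSets.

Section RowBoxes.

Variables (R : finType) (n : nat) (P : 'I_n -> {set R}).

Definition rowbox : {set 'rV[R]_n} := [set x : 'rV_n | [forall i, x ord0 i \in P i]].

Lemma card_rowbox : #|rowbox| = \prod_(i < n) #|P i|.
Proof.
have row_inj : injective (fun f : {ffun 'I_n -> R} => (\row_i f i)%R).
  by move=> f g /matrixP eq_fg; apply/ffunP => i; have := eq_fg ord0 i; rewrite !mxE.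
have -> : rowbox =
    [set (\row_i f i)%R | f : {ffun 'I_n -> R} in family (fun i => mem (P i))].
  apply/setP => x; rewrite inE; apply/forallP/imsetP => [x_box|[f /familyP f_fam ->] i].
    exists [ffun i => x ord0 i]; first by apply/familyP => i; rewrite ffunE.
    by apply/rowP => i; rewrite !mxE ffunE.
  by rewrite mxE.
rewrite card_imset // card_family foldrE big_map big_enum /=.
by apply: eq_bigr => i _; rewrite cardE.
Qed.

End RowBoxes.

Lemma diffset_rowbox (R : finZmodType) n (P : 'I_n -> {set R}) :
  diffset (rowbox P) \subset rowbox (fun i => diffset (P i)).
Proof.
apply/subsetP => z /imset2P[x y]; rewrite !inE => /forallP x_box /forallP y_box ->.
by apply/forallP => i; rewrite !mxE; apply/imset2P; exists (x ord0 i) (y ord0 i).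
Qed.

Lemma card_progression_Fp p k : prime p -> k <= p ->
  #|progression (1 : 'F_p)%R k| = k.
Proof.
move=> p_pr le_kp; rewrite card_imset ?card_ord // => i j /(congr1 val) /=.
rewrite !val_Fp_nat // !modn_small => [/val_inj //||]; exact: leq_trans (ltn_ord _) le_kp.
Qed.

Theorem mainTheorem5 (p d t r : nat) :
  prime p -> t <= d -> p ^ t < r -> r <= p ^ t.+1 -> r <= p ^ d ->
  rho_minus [the finZmodType of 'rV['F_p]_d] r
    <= p ^ t * minn (2 * ceil_div r (p ^ t)).-1 p.
Proof.
move=> p_pr _ lt_pt_r le_r_ptS le_r_pd.
have pt_gt0 : 0 < p ^ t by rewrite expn_gt0 prime_gt0.
set k := ceil_div r (p ^ t).
have le_kp : k <= p by apply: ceil_div_leq; rewrite // -expnS.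
have lt_td : t < d.
  by rewrite -(ltn_exp2l _ _ (prime_gt1 p_pr)); apply: leq_trans le_r_pd.
pose P (i : 'I_d) : {set 'F_p} :=
  if i < t then setT else if i == t :> nat then progression 1%R k else [set 0%R].
have card_box : #|rowbox P| = p ^ t * k.
  rewrite card_rowbox -(prod_ord_profile p k lt_td); apply: eq_bigr => i _.
  rewrite /P; case: ifP => _; first by rewrite cardsT card_Fp.
  by case: ifP => _; rewrite ?cards1 ?card_progression_Fp.
have [A sAB cardA] : exists2 A : {set 'rV['F_p]_d}, A \subset rowbox P & #|A| = r.
  by apply: exists_subset_of_card; rewrite card_box mulnC leq_ceil_div_mul.
apply: leq_trans (rho_minus_le cardA) _.
apply: leq_trans (subset_leq_card (subset_trans (diffsetS sAB) (diffset_rowbox P))) _.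
rewrite card_rowbox -(prod_ord_profile p _ lt_td); apply: leq_prod => i _.
have le_card_p (B : {set 'F_p}) : #|B| <= p by rewrite -[leqRHS](card_Fp p_pr) max_card.
rewrite /P; case: ifP => _; first exact: le_card_p.
case: ifP => _; last by rewrite diffset1 cards1.
by rewrite leq_min card_diffset_progression le_card_p.
Qed.
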